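(* Let $n > m \geq 2$ be integers, let $X$ be a random variable taking values in $\mathcal{X}=\{x_1,\ldots,x_n\}$ with $P\{X=x_i\}=p_i$, where $\mathbf{p}=(p_1,\ldots,p_n)$ satisfies $p_1\geq p_2\geq\cdots\geq p_n\geq 0$ and $\sum_i p_i=1$. Then $$\max_{f\in\mathcal{F}_m} H(f(X)) \in \big[\,H(R_m(\mathbf{p}))-\alpha,\; H(R_m(\mathbf{p}))\,\big], \qquad \text{where } \alpha = 1-\frac{1+\ln(\ln 2)}{\ln 2}<0.08608,$$ and $$\min_{f\in\mathcal{F}_m} H(f(X)) = H(Q_m(\mathbf{p})).$$
   Context: $H$ denotes Shannon entropy in bits: for a probability vector $\mathbf{a}=(a_1,\ldots,a_t)$, $H(\mathbf{a})=-\sum_i a_i\log_2 a_i$ with $0\log 0=0$; $\ln$ is the natural logarithm. $\mathcal{Y}_m=\{y_1,\ldots,y_m\}$ is a set of $m$ elements and $\mathcal{F}_m$ is the set of all surjective functions $f:\mathcal{X}\to\mathcal{Y}_m$. Definition of $R_m(\mathbf{p})=(r_1,\ldots,r_m)$ for $\mathbf{p}$ sorted nonincreasingly: if $p_1<1/m$, then $R_m(\mathbf{p})=(1/m,\ldots,1/m)$. If $p_1\geq 1/m$, let $i^*$ be the maximum index $i\in\{1,\ldots,m-1\}$ such that $p_i\geq \frac{\sum_{j=i+1}^n p_j}{m-i}$. Then set $r_i=p_i$ for $i=1,\ldots,i^*$ and $r_i=\frac{\sum_{j=i^*+1}^n p_j}{m-i^*}$ for $i=i^*+1,\ldots,m$.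 Definition of $Q_m(\mathbf{p})=(q_1,\ldots,q_m)$: $q_1=\sum_{k=1}^{n-m+1}p_k$ and $q_i=p_{n-m+i}$ for $i=2,\ldots,m$. *)

From Stdlib Require Import Reals Lra Arith.
Open Scope R_scope.

(* Indices are 0-based: p i is the paper's p_{i+1}, for i < n. *)

Fixpoint rsum (t : nat) (g : nat -> R) : R :=
  match t with
  | O => 0
  | S k => rsum k g + g k
  end.

Definition plog2p (x : R) : R :=
  if Rle_dec x 0 then 0 else x * (ln x / ln 2).

Definition entropy (t : nat) (a : nat -> R) : R :=
  - rsum t (fun i => plog2p (a i)).

(* f : X -> Y_m encoded on indices: f i < m for i < n *)
Definition maps_into (n m : nat) (f : nat -> nat) : Prop :=
  forall i, (i < n)%nat -> (f i < m)%nat.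

Definition surj_onto (n m : nat) (f : nat -> nat) : Prop :=
  maps_into n m f /\ forall j, (j < m)%nat -> exists i, (i < n)%nat /\ f i = j.

(* distribution of f(X): P{f(X) = y_{j+1}} *)
Definition pushforward (n : nat) (f : nat -> nat) (p : nat -> R) (j : nat) : R :=
  rsum n (fun i => if Nat.eqb (f i) j then p i else 0).

(* sum_{j = k}^{n-1} p j  (0-based);  in 1-based notation sum_{j=k+1}^n p_j *)
Definition tail (n : nat) (p : nat -> R) (k : nat) : R :=
  rsum n (fun j => if Nat.leb k j then p j else 0).

(* condition for 1-based index i:  p_i >= (sum_{j=i+1}^n p_j) / (m - i) *)
Definition istar_cond (n m : nat) (p : nat -> R) (i : nat) : bool :=
  if Rle_dec (tail n p i / INR (m - i)) (p (i - 1)%nat) then true else false.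

(* largest 1-based i in {1,...,k} satisfying the condition (0 if none) *)
Fixpoint istar_aux (n m : nat) (p : nat -> R) (k : nat) : nat :=
  match k with
  | O => O
  | S k' => if istar_cond n m p (S k') then S k' else istar_aux n m p k'
  end.

Definition istar (n m : nat) (p : nat -> R) : nat := istar_aux n m p (m - 1).

Definition Rm (n m : nat) (p : nat -> R) (r : nat) : R :=
  if Rlt_dec (p O) (1 / INR m) then 1 / INR m
  else let i := istar n m p in
       if Nat.ltb r i then p r else tail n p i / INR (m - i).

Definition Qm (n m : nat) (p : nat -> R) (r : nat) : R :=
  match r with
  | O => rsum (n - m + 1) p
  | _ => p (n - m + r)%nat
  end.

Definition alpha : R := 1 - (1 + ln (ln 2)) / ln 2.

From Pilot Require Import Defs.
From Stdlib Require Import Reals Lra Lia List Factorial Classical.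
Open Scope R_scope.

(* Write [neg_xlnx x = - x ln x], so that entropies are sums of [neg_xlnx] divided by
   [ln 2], and cut [R_m(p)] as the [k] largest masses followed by [m - k] copies of a
   level [c].

   Upper bound (Gibbs): for a surjection [f], put on each label [j] the weight [t j]
   equal to [p] of the first atom of its fibre if that atom is among the [k] largest,
   and [c] otherwise.  Then [sum t <= 1], so [H(f(X)) <= sum_j q_j (- ln t_j)], and
   regrouping by atoms, using [t (f i) >= p i] for [i < k] and [t >= c], bounds this by
   [H(R_m(p))].

   Lower bound: keep the [k] largest atoms as singletons and assign every remaining atom,
   from largest to smallest, to the currently lightest of the other [m - k] labels.  When
   [m - k >= 2] every remaining atom is lighter than [c], and then these [m - k] loads
   lie within a factor [2] of each other and average [c]; on such a window [- x ln x] is above its chord, and the loss against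
   [m - k] copies of [c] is at most [(m - k) c alpha ln 2 <= alpha ln 2].

   Minimum: by induction on the number of atoms.  If the smallest atom is not alone in
   its fibre, make it alone and move the rest of its fibre onto another label; this
   spreads the distribution and does not increase the entropy.  Removing the isolated
   atom and its label reduces to [Q_(m-1)] of the remaining atoms. *)

Lemma rsum_ext t g g' : (forall i, (i < t)%nat -> g i = g' i) -> rsum t g = rsum t g'.
Proof. induction t; intros H; simpl; auto. rewrite IHt, H; auto. Qed.

Lemma rsum_le t g g' : (forall i, (i < t)%nat -> g i <= g' i) -> rsum t g <= rsum t g'.
Proof.
  induction t; intros H; simpl; [lra|].
  pose proof (H t ltac:(lia)); pose proof (IHt ltac:(auto)); lra.
Qed.

Lemma rsum_plus t g h : rsum t (fun i => g i + h i) = rsum t g + rsum t h.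
Proof. induction t; simpl; lra. Qed.

Lemma rsum_minus t g h : rsum t (fun i => g i - h i) = rsum t g - rsum t h.
Proof. induction t; simpl; lra. Qed.

Lemma rsum_mult_l t c g : rsum t (fun i => c * g i) = c * rsum t g.
Proof. induction t; simpl; [ring | rewrite IHt; ring]. Qed.

Lemma rsum_const t c : rsum t (fun _ => c) = INR t * c.
Proof. induction t; cbn [rsum]; [simpl; ring | rewrite IHt, S_INR; ring]. Qed.

Lemma rsum_nonneg t g : (forall i, (i < t)%nat -> 0 <= g i) -> 0 <= rsum t g.
Proof.
  intros H. apply Rle_trans with (rsum t (fun _ => 0)).
  - rewrite rsum_const; lra.
  - apply rsum_le; auto.
Qed.

Lemma rsum_split a b g : rsum (a + b) g = rsum a g + rsum b (fun i => g (a + i)%nat).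
Proof.
  induction b; simpl; [rewrite Nat.add_0_r; ring|].
  rewrite Nat.add_succ_r; simpl; rewrite IHb; ring.
Qed.

Lemma rsum_comm a b (F : nat -> nat -> R) :
  rsum a (fun j => rsum b (fun i => F i j)) = rsum b (fun i => rsum a (fun j => F i j)).
Proof.
  induction a; simpl.
  - rewrite rsum_const; ring.
  - rewrite IHa, <- rsum_plus; reflexivity.
Qed.

Lemma rsum_dirac t a h :
  rsum t (fun i => if Nat.eqb i a then h i else 0) = if Nat.ltb a t then h a else 0.
Proof.
  induction t; cbn [rsum]; [destruct (Nat.ltb_spec a 0); [lia | reflexivity]|].
  rewrite IHt. destruct (Nat.eqb_spec t a), (Nat.ltb_spec a t), (Nat.ltb_spec a (S t));
    subst; try lia; ring.
Qed.

Lemma rsum_term_le t g i : (forall j, (j < t)%nat -> 0 <= g j) -> (i < t)%nat -> g i <= rsum t g.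
Proof.
  induction t; intros H Hi; [lia|]. simpl.
  destruct (Nat.eq_dec i t) as [->|].
  - pose proof (rsum_nonneg t g ltac:(auto)); lra.
  - pose proof (IHt ltac:(auto) ltac:(lia)); pose proof (H t ltac:(lia)); lra.
Qed.

Lemma rsum_pos_exists t g : 0 < rsum t g -> exists i, (i < t)%nat /\ 0 < g i.
Proof.
  induction t; simpl; intros H; [lra|].
  destruct (Rlt_dec 0 (g t)); [exists t; split; auto|].
  destruct IHt as [i [Hi Hg]]; [lra|]. exists i; split; auto.
Qed.

Lemma rsum_ge_exists t g c : (1 <= t)%nat -> INR t * c <= rsum t g ->
  exists i, (i < t)%nat /\ c <= g i.
Proof.
  induction t; intros Ht H; [lia|]. cbn [rsum] in H. rewrite S_INR in H.
  destruct (Rle_dec c (g t)); [exists t; split; auto|].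
  destruct t; [cbn [rsum INR] in H; lra|].
  destruct IHt as [i [Hi Hg]]; [lia|lra|]. exists i; split; auto.
Qed.

Lemma rsum_at_most_one t (P : nat -> bool) x : 0 <= x ->
  (forall j j', (j < t)%nat -> (j' < t)%nat -> P j = true -> P j' = true -> j = j') ->
  rsum t (fun j => if P j then x else 0) <= x.
Proof.
  induction t; intros Hx HU; simpl; [lra|].
  destruct (P t) eqn:E.
  - rewrite (rsum_ext t _ (fun _ => 0)), rsum_const; [lra|].
    intros i Hi. destruct (P i) eqn:E'; auto.
    specialize (HU i t ltac:(lia) ltac:(lia) E' E); lia.
  - rewrite Rplus_0_r. apply IHt; [exact Hx|]. intros; apply HU; auto; lia.
Qed.

Lemma nonincreasing_le n (p : nat -> R) : (forall i, (S i < n)%nat -> p (S i) <= p i) ->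
  forall i j, (i <= j)%nat -> (j < n)%nat -> p j <= p i.
Proof.
  intros H i j Hij. induction Hij; intros; [lra|].
  pose proof (H m ltac:(lia)); pose proof (IHHij ltac:(lia)); lra.
Qed.

Definition neg_xlnx (x : R) : R := if Rle_dec x 0 then 0 else - (x * ln x).

Lemma neg_xlnx_pos x : 0 < x -> neg_xlnx x = - (x * ln x).
Proof. intros. unfold neg_xlnx. destruct (Rle_dec x 0); lra. Qed.

Lemma neg_xlnx_nonpos x : x <= 0 -> neg_xlnx x = 0.
Proof. intros. unfold neg_xlnx. destruct (Rle_dec x 0); lra. Qed.

Lemma ln2_pos : 0 < ln 2.
Proof. pose proof ln_lt_2; lra. Qed.

Lemma entropy_neg_xlnx t a : entropy t a = rsum t (fun i => neg_xlnx (a i)) / ln 2.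
Proof.
  unfold entropy. pose proof ln2_pos.
  rewrite (rsum_ext t _ (fun i => - / ln 2 * neg_xlnx (a i))), rsum_mult_l; [field; lra|].
  intros i _. unfold plog2p, neg_xlnx. destruct (Rle_dec (a i) 0); [ring | field; lra].
Qed.

Lemma ln_le x y : 0 < x -> x <= y -> ln x <= ln y.
Proof. intros Hx [Hxy | ->]; [left; apply ln_increasing | right]; auto. Qed.

Lemma ln_le_sub_1 z : 0 < z -> ln z <= z - 1.
Proof.
  intros Hz. rewrite <- (ln_exp (z - 1)). apply ln_le; auto.
  pose proof (exp_ineq1_le (z - 1)); lra.
Qed.

Lemma neg_xlnx_le_cross q t : 0 <= q -> 0 <= t -> (0 < q -> 0 < t) ->
  neg_xlnx q <= - q * ln t + t - q.
Proof.
  intros Hq Ht Hqt. destruct (Rle_dec q 0).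
  - rewrite neg_xlnx_nonpos by lra. replace q with 0 by lra. lra.
  - assert (Hq' : 0 < q) by lra. specialize (Hqt Hq'). rewrite neg_xlnx_pos by auto.
    pose proof (ln_le_sub_1 (t / q) ltac:(apply Rdiv_lt_0_compat; auto)) as H.
    unfold Rdiv in H. rewrite ln_mult, ln_Rinv in H by auto using Rinv_0_lt_compat.
    assert (q * (ln t - ln q) <= q * (t * / q - 1)) by (apply Rmult_le_compat_l; lra).
    replace (q * (t * / q - 1)) with (t - q) in * by (field; lra). lra.
Qed.

Lemma gibbs_inequality m q t :
  (forall j, (j < m)%nat -> 0 <= q j) -> (forall j, (j < m)%nat -> 0 <= t j) ->
  (forall j, (j < m)%nat -> 0 < q j -> 0 < t j) ->
  rsum m q = 1 -> rsum m t <= 1 ->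
  rsum m (fun j => neg_xlnx (q j)) <= rsum m (fun j => q j * - ln (t j)).
Proof.
  intros Hq Ht Hqt Hq1 Ht1.
  assert (rsum m (fun j => neg_xlnx (q j)) <= rsum m (fun j => q j * - ln (t j) + t j - q j)).
  { apply rsum_le. intros j Hj.
    pose proof (neg_xlnx_le_cross (q j) (t j) (Hq j Hj) (Ht j Hj) (Hqt j Hj)); lra. }
  rewrite rsum_minus, rsum_plus in H. lra.
Qed.

Lemma pushforward_S t f p j :
  pushforward (S t) f p j = pushforward t f p j + if Nat.eqb (f t) j then p t else 0.
Proof. reflexivity. Qed.

Lemma pushforward_nonneg n f p j :
  (forall i, (i < n)%nat -> 0 <= p i) -> 0 <= pushforward n f p j.
Proof. intros. apply rsum_nonneg. intros. destruct (Nat.eqb (f i) j); auto; lra. Qed.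

Lemma pushforward_ge n f p i :
  (forall i, (i < n)%nat -> 0 <= p i) -> (i < n)%nat -> p i <= pushforward n f p (f i).
Proof.
  intros Hp Hi. unfold pushforward.
  pose proof (rsum_term_le n (fun i' => if Nat.eqb (f i') (f i) then p i' else 0) i) as H.
  cbv beta in H. rewrite Nat.eqb_refl in H. apply H; auto.
  intros j Hj. cbv beta. destruct (Nat.eqb (f j) (f i)); [apply Hp; auto | lra].
Qed.

Lemma rsum_pushforward_weighted n m f p w : maps_into n m f ->
  rsum m (fun j => pushforward n f p j * w j) = rsum n (fun i => p i * w (f i)).
Proof.
  intros Hf. unfold pushforward.
  rewrite (rsum_ext m _ (fun j => rsum n (fun i => if Nat.eqb (f i) j then p i * w j else 0))).
  - rewrite rsum_comm. apply rsum_ext. intros i Hi.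
    rewrite (rsum_ext m _ (fun j => if Nat.eqb j (f i) then p i * w j else 0)),
      rsum_dirac by (intros; now rewrite Nat.eqb_sym).
    destruct (Nat.ltb_spec (f i) m); [reflexivity | specialize (Hf i Hi); lia].
  - intros j _. rewrite Rmult_comm, <- rsum_mult_l. apply rsum_ext. intros.
    destruct (Nat.eqb (f i) j); ring.
Qed.

Lemma rsum_pushforward n m f p : maps_into n m f -> rsum m (pushforward n f p) = rsum n p.
Proof.
  intros Hf. rewrite <- (rsum_ext n (fun i => p i * 1)) by (intros; ring).
  rewrite <- (rsum_pushforward_weighted n m f p (fun _ => 1)) by auto.
  apply rsum_ext. intros; ring.
Qed.

Lemma rsum_add_tail n p k : (k <= n)%nat -> rsum k p + Defs.tail n p k = rsum n p.
Proof.
  intros H. unfold Defs.tail. replace n with (k + (n - k))%nat by lia. rewrite !rsum_split.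
  rewrite (rsum_ext k (fun j => if Nat.leb k j then p j else 0) (fun _ => 0)), rsum_const,
    (rsum_ext (n - k) (fun i => if Nat.leb k (k + i) then p (k + i)%nat else 0) (fun i => p (k + i)%nat)).
  - ring.
  - intros i _. destruct (Nat.leb_spec k (k + i)); [reflexivity | lia].
  - intros i Hi. destruct (Nat.leb_spec k i); [lia | reflexivity].
Qed.

Lemma tail_S n p k : (k < n)%nat -> Defs.tail n p k = p k + Defs.tail n p (S k).
Proof.
  intros. pose proof (rsum_add_tail n p k ltac:(lia)).
  pose proof (rsum_add_tail n p (S k) ltac:(lia)). simpl in *. lra.
Qed.

Lemma tail_nonneg n p k : (forall i, (i < n)%nat -> 0 <= p i) -> 0 <= Defs.tail n p k.
Proof. intros. apply rsum_nonneg. intros. destruct (Nat.leb k i); auto; lra. Qed.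

Lemma istar_aux_le n m p K : (istar_aux n m p K <= K)%nat.
Proof. induction K; simpl; [lia|]. destruct (istar_cond n m p (S K)); lia. Qed.

Lemma istar_aux_cond n m p K :
  istar_aux n m p K = O \/ istar_cond n m p (istar_aux n m p K) = true.
Proof. induction K; simpl; auto. destruct (istar_cond n m p (S K)) eqn:E; auto. Qed.

Lemma istar_aux_max n m p K i :
  (istar_aux n m p K < i <= K)%nat -> istar_cond n m p i = false.
Proof.
  induction K; simpl; intros H; [lia|].
  destruct (istar_cond n m p (S K)) eqn:E; [lia|].
  destruct (Nat.eq_dec i (S K)) as [->|]; auto. apply IHK; lia.
Qed.

Lemma istar_condP n m p i :
  istar_cond n m p i = true <-> Defs.tail n p i / INR (m - i) <= p (i - 1)%nat.
Proof. unfold istar_cond. destruct (Rle_dec _ _); split; auto; discriminate. Qed.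

Lemma istar_spec n m p : (2 <= m)%nat -> (m < n)%nat -> rsum n p = 1 -> 1 / INR m <= p O ->
  let k := istar n m p in
  (1 <= k < m)%nat /\ Defs.tail n p k / INR (m - k) <= p (k - 1)%nat /\
  ((k + 1 = m)%nat \/ p k < Defs.tail n p (S k) / INR (m - S k)).
Proof.
  intros Hm Hmn Hn Hp0 k.
  assert (HmR : 2 <= INR m) by (replace 2 with (INR 2) by (simpl; ring); apply le_INR; auto).
  assert (Hc1 : istar_cond n m p 1 = true).
  { apply istar_condP. pose proof (rsum_add_tail n p 1 ltac:(lia)) as Ht. simpl in Ht.
    rewrite minus_INR by lia. simpl (INR 1). simpl (1 - 1)%nat.
    assert (1 <= p O * INR m) by (unfold Rdiv in Hp0; apply Rmult_le_reg_r with (/ INR m);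
      [apply Rinv_0_lt_compat; lra | rewrite Rmult_assoc, Rinv_r; lra]).
    apply Rmult_le_reg_r with (INR m - 1); [lra|].
    unfold Rdiv. rewrite Rmult_assoc, Rinv_l by lra. lra. }
  assert (Hkm : (k <= m - 1)%nat) by apply istar_aux_le.
  assert (Hk1 : (1 <= k)%nat).
  { destruct (Nat.eq_dec k 0) as [E|]; [|lia].
    rewrite (istar_aux_max n m p (m - 1) 1) in Hc1; [discriminate|]. unfold k, istar in E. lia. }
  split; [lia|split].
  - apply istar_condP. destruct (istar_aux_cond n m p (m - 1)); unfold k, istar in *; auto; lia.
  - destruct (Nat.eq_dec (k + 1) m); [left; auto | right].
    assert (Hf : istar_cond n m p (S k) = false) by (apply (istar_aux_max n m p (m - 1)); unfold k, istar in *; lia).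
    destruct (Rlt_le_dec (p k) (Defs.tail n p (S k) / INR (m - S k))) as [|Hle]; auto.
    assert (istar_cond n m p (S k) = true) by (apply istar_condP; replace (S k - 1)%nat with k by lia; exact Hle).
    congruence.
Qed.

Lemma Rm_shape n m p : (2 <= m)%nat -> (m < n)%nat -> (forall i, (i < n)%nat -> 0 <= p i) ->
  (forall i, (S i < n)%nat -> p (S i) <= p i) -> rsum n p = 1 ->
  exists k c, (k < m)%nat /\ 0 <= c /\ (forall i, (i < k)%nat -> c <= p i) /\
    rsum k p + INR (m - k) * c = 1 /\ (forall r, Rm n m p r = if Nat.ltb r k then p r else c) /\
    ((k + 1 = m)%nat \/ forall i, (k <= i < n)%nat -> p i < c).
Proof.
  intros Hm Hmn Hp Hs Hn.
  assert (HmR : 2 <= INR m) by (replace 2 with (INR 2) by (simpl; ring); apply le_INR; auto).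
  destruct (Rlt_dec (p O) (1 / INR m)) as [Hu | Hu].
  - exists O, (1 / INR m). repeat split; try lia.
    + left; apply Rdiv_lt_0_compat; lra.
    + simpl. rewrite Nat.sub_0_r. field. lra.
    + intros r. unfold Rm. destruct (Rlt_dec _ _); [|contradiction].
      destruct (Nat.ltb_spec r 0); [lia | reflexivity].
    + right. intros i [_ Hi]. pose proof (nonincreasing_le n p Hs 0 i ltac:(lia) Hi). lra.
  - destruct (istar_spec n m p Hm Hmn Hn ltac:(lra)) as [Hk [Hck Hnext]].
    set (k := istar n m p) in *.
    assert (HmkR : 0 < INR (m - k)) by (apply lt_0_INR; lia).
    assert (Htk := rsum_add_tail n p k ltac:(lia)).
    assert (Htn := tail_nonneg n p k Hp).
    exists k, (Defs.tail n p k / INR (m - k)). repeat split.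
    + lia.
    + apply Rmult_le_pos; auto. left; apply Rinv_0_lt_compat; auto.
    + intros i Hi. pose proof (nonincreasing_le n p Hs i (k - 1) ltac:(lia) ltac:(lia)). lra.
    + field_simplify; lra.
    + intros r. unfold Rm. destruct (Rlt_dec _ _); [contradiction | reflexivity].
    + destruct (Nat.eq_dec (k + 1) m); [left; auto | right].
      destruct Hnext as [| Hlt]; [lia|].
      assert (HR : INR (m - k) = INR (m - S k) + 1).
      { replace (m - k)%nat with (S (m - S k)) by lia. apply S_INR. }
      assert (HR1 : 0 < INR (m - S k)) by (apply lt_0_INR; lia).
      assert (Hpk : p k < Defs.tail n p k / INR (m - k)).
      { rewrite tail_S by lia. apply Rmult_lt_reg_r with (INR (m - k)); auto.
        unfold Rdiv. rewrite Rmult_assoc, Rinv_l by lra.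
        apply Rmult_lt_compat_r with (r := INR (m - S k)) in Hlt; auto.
        unfold Rdiv in Hlt. rewrite Rmult_assoc, Rinv_l in Hlt by lra. nra. }
      intros i [Hi Hin]. pose proof (nonincreasing_le n p Hs k i Hi Hin). lra.
Qed.

Fixpoint first_index (f : nat -> nat) (j : nat) (n : nat) : nat :=
  match n with
  | O => O
  | S n' => let r := first_index f j n' in
            if Nat.ltb r n' then r else if Nat.eqb (f n') j then n' else S n'
  end.

Lemma first_index_le f j n : (first_index f j n <= n)%nat.
Proof.
  induction n; simpl; [lia|].
  destruct (Nat.ltb_spec (first_index f j n) n); [lia|]. destruct (Nat.eqb (f n) j); lia.
Qed.

Lemma first_index_spec f j n : (first_index f j n < n)%nat -> f (first_index f j n) = j.
Proof.
  induction n; simpl; intros H; [lia|].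
  destruct (Nat.ltb_spec (first_index f j n) n); auto.
  destruct (Nat.eqb_spec (f n) j); [auto | lia].
Qed.

Lemma first_index_min f j n i : (i < n)%nat -> f i = j -> (first_index f j n <= i)%nat.
Proof.
  induction n; simpl; intros Hi Hf; [lia|].
  pose proof (first_index_le f j n).
  destruct (Nat.eq_dec i n) as [->|].
  - destruct (Nat.ltb_spec (first_index f j n) n); [lia|]. rewrite Hf, Nat.eqb_refl; lia.
  - pose proof (IHn ltac:(lia) Hf). destruct (Nat.ltb_spec (first_index f j n) n); lia.
Qed.

(* [t j] is [p] at the first atom of the fibre of [j] when that atom is among the
   [k] largest, and the level [c] otherwise; distinct fibres have distinct first atoms. *)
Lemma level_majorant n m p f k c : (k <= m)%nat -> (k <= n)%nat ->
  (forall i, (S i < n)%nat -> p (S i) <= p i) -> surj_onto n m f ->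
  (forall i, (i < k)%nat -> c <= p i) -> rsum k p + INR (m - k) * c = 1 ->
  exists t, (forall j, (j < m)%nat -> c <= t j) /\
            (forall i, (i < k)%nat -> p i <= t (f i)) /\ rsum m t <= 1.
Proof.
  intros Hkm Hkn Hs [_ Hsurj] Hcp Hsum.
  set (g := fun j => first_index f j n).
  assert (Hg : forall j, (j < m)%nat -> f (g j) = j).
  { intros j Hj. destruct (Hsurj j Hj) as [i [Hi Hfi]].
    apply first_index_spec. pose proof (first_index_min f j n i Hi Hfi). unfold g; lia. }
  exists (fun j => if Nat.ltb (g j) k then p (g j) else c). split; [|split].
  - intros j _. destruct (Nat.ltb_spec (g j) k); [auto | lra].
  - intros i Hi. assert (Hgi : (g (f i) <= i)%nat) by (apply first_index_min; lia).
    destruct (Nat.ltb_spec (g (f i)) k); [|lia].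
    apply (nonincreasing_le n p Hs); lia.
  - rewrite (rsum_ext m _ (fun j => c + rsum k (fun i => if Nat.eqb i (g j) then p i - c else 0))).
    + rewrite rsum_plus, rsum_const, rsum_comm.
      assert (Hfib : rsum k (fun i => rsum m (fun j => if Nat.eqb i (g j) then p i - c else 0))
                     <= rsum k (fun i => p i - c)).
      { apply rsum_le. intros i Hi. apply rsum_at_most_one; [pose proof (Hcp i Hi); lra|].
        intros j j' Hj Hj' E E'. apply Nat.eqb_eq in E, E'. rewrite <- (Hg j), <- (Hg j'); congruence. }
      rewrite rsum_minus, rsum_const in Hfib. rewrite minus_INR in Hsum by exact Hkm. lra.
    + intros j _. rewrite rsum_dirac. destruct (Nat.ltb (g j) k); ring.
Qed.

Lemma rsum_above_level n m p k c : (k <= n)%nat ->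
  rsum k p + INR (m - k) * c = 1 -> rsum n p = 1 ->
  rsum (n - k) (fun d => p (k + d)%nat) = INR (m - k) * c.
Proof.
  intros Hkn Hsum Hn. rewrite <- Hsum in Hn.
  replace n with (k + (n - k))%nat in Hn by lia. rewrite rsum_split in Hn. lra.
Qed.

Lemma level_pos n m p k c : (k <= n)%nat -> (forall i, (i < n)%nat -> 0 <= p i) ->
  rsum k p + INR (m - k) * c = 1 -> rsum n p = 1 ->
  forall i, (k <= i < n)%nat -> 0 < p i -> 0 < c.
Proof.
  intros Hkn Hp Hsum Hn i Hi Hpi.
  pose proof (rsum_term_le (n - k) (fun d => p (k + d)%nat) (i - k)
    ltac:(intros; apply Hp; lia) ltac:(lia)) as H.
  cbv beta in H. replace (k + (i - k))%nat with i in H by lia.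
  rewrite (rsum_above_level n m p k c) in H by auto.
  pose proof (pos_INR (m - k)). nra.
Qed.

Lemma rsum_cross_level n m p k c : (k <= n)%nat -> 0 <= c ->
  rsum k p + INR (m - k) * c = 1 -> rsum n p = 1 ->
  rsum n (fun i => if Nat.ltb i k then neg_xlnx (p i) else p i * - ln c)
  = rsum k (fun i => neg_xlnx (p i)) + INR (m - k) * neg_xlnx c.
Proof.
  intros Hkn Hc Hsum Hn. replace n with (k + (n - k))%nat at 1 by lia. rewrite rsum_split. f_equal.
  - apply rsum_ext. intros i Hi. destruct (Nat.ltb_spec i k); [reflexivity | lia].
  - rewrite (rsum_ext (n - k) _ (fun d => - ln c * p (k + d)%nat)), rsum_mult_l.
    + rewrite (rsum_above_level n m p k c) by auto.
      destruct (Rle_lt_dec c 0) as [Hc0|Hc0].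
      * replace c with 0 by lra. rewrite neg_xlnx_nonpos by lra. ring.
      * rewrite neg_xlnx_pos by auto. ring.
    + intros d _. destruct (Nat.ltb_spec (k + d) k); [lia | ring].
Qed.

Lemma upper_bound n m p f k c :
  (k < m)%nat -> (m < n)%nat -> (forall i, (i < n)%nat -> 0 <= p i) ->
  (forall i, (S i < n)%nat -> p (S i) <= p i) -> surj_onto n m f -> 0 <= c ->
  (forall i, (i < k)%nat -> c <= p i) -> rsum k p + INR (m - k) * c = 1 -> rsum n p = 1 ->
  rsum m (fun j => neg_xlnx (pushforward n f p j))
  <= rsum k (fun i => neg_xlnx (p i)) + INR (m - k) * neg_xlnx c.
Proof.
  intros Hkm Hmn Hp Hs Hf Hc Hcp Hsum Hn.
  destruct (level_majorant n m p f k c ltac:(lia) ltac:(lia) Hs Hf Hcp Hsum) as [t [Htc [Htp Ht1]]].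
  assert (Hcpos := level_pos n m p k c ltac:(lia) Hp Hsum Hn).
  assert (Hmap := proj1 Hf).
  set (q := pushforward n f p).
  assert (Hq0 : forall j, (j < m)%nat -> 0 <= q j) by (intros; apply pushforward_nonneg; auto).
  assert (Ht0 : forall j, (j < m)%nat -> 0 <= t j) by (intros j Hj; pose proof (Htc j Hj); lra).
  assert (Hqt : forall j, (j < m)%nat -> 0 < q j -> 0 < t j).
  { intros j Hj Hqj. destruct (rsum_pos_exists _ _ Hqj) as [i [Hi Hpi]].
    destruct (Nat.eqb_spec (f i) j) as [<-|]; [|lra].
    destruct (Nat.ltb_spec i k).
    - pose proof (Htp i ltac:(lia)); lra.
    - pose proof (Hcpos i ltac:(lia) Hpi); pose proof (Htc (f i) Hj); lra. }
  eapply Rle_trans.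
  { apply (gibbs_inequality m q t Hq0 Ht0 Hqt); auto. unfold q; rewrite rsum_pushforward; auto. }
  unfold q. rewrite rsum_pushforward_weighted by auto.
  eapply Rle_trans with (rsum n (fun i => if Nat.ltb i k then neg_xlnx (p i) else p i * - ln c)).
  - apply rsum_le. intros i Hi. destruct (Req_dec (p i) 0) as [E|].
    + rewrite E. destruct (Nat.ltb i k); [rewrite neg_xlnx_nonpos|]; lra.
    + assert (Hpi : 0 < p i) by (pose proof (Hp i Hi); lra).
      destruct (Nat.ltb_spec i k).
      * rewrite neg_xlnx_pos by auto.
        pose proof (ln_le (p i) (t (f i)) Hpi (Htp i ltac:(lia))). nra.
      * pose proof (Hcpos i ltac:(lia) Hpi). pose proof (Htc (f i) (Hmap i Hi)).
        pose proof (ln_le c (t (f i)) ltac:(lra) ltac:(lra)). nra.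
  - right. apply rsum_cross_level; auto; lia.
Qed.

Definition alpha_nat : R := ln 2 - 1 - ln (ln 2).

Lemma alpha_nat_nonneg : 0 <= alpha_nat.
Proof. unfold alpha_nat. pose proof (ln_le_sub_1 (ln 2) ln2_pos). lra. Qed.

Lemma alpha_eq : alpha = alpha_nat / ln 2.
Proof. unfold alpha, alpha_nat. pose proof ln2_pos. field. lra. Qed.

(* The chord of [neg_xlnx] over [[a, 2a]], of slope [- ln a - 2 ln 2]. *)
Lemma neg_xlnx_ge_chord a l : 0 < a -> a <= l <= 2 * a ->
  - (l * ln a) - 2 * ln 2 * (l - a) <= neg_xlnx l.
Proof.
  intros Ha [H1 H2]. rewrite neg_xlnx_pos by lra.
  pose proof (neg_xlnx_le_cross a l ltac:(lra) ltac:(lra) ltac:(lra)) as G1.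
  pose proof (neg_xlnx_le_cross (2 * a) l ltac:(lra) ltac:(lra) ltac:(lra)) as G2.
  rewrite neg_xlnx_pos in G1, G2 by lra. rewrite ln_mult in G2 by lra.
  assert ((2 * a - l) * (- (a * ln a)) <= (2 * a - l) * (- a * ln l + l - a))
    by (apply Rmult_le_compat_l; lra).
  assert ((l - a) * (- (2 * a * (ln 2 + ln a))) <= (l - a) * (- (2 * a) * ln l + l - 2 * a))
    by (apply Rmult_le_compat_l; lra).
  apply Rmult_le_reg_l with a; [auto | nra].
Qed.

(* Maximising [2 ln 2 (c - a) - c ln (c / a)] over [a > 0] gives exactly [c * alpha_nat]. *)
Lemma chord_defect_le a c : 0 < a -> 0 < c ->
  2 * ln 2 * (c - a) <= c * (ln c - ln a) + c * alpha_nat.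
Proof.
  intros Ha Hc. pose proof ln2_pos. unfold alpha_nat.
  set (v := c / (2 * ln 2 * a)).
  assert (Hv : 0 < v) by (unfold v; apply Rdiv_lt_0_compat; nra).
  pose proof (ln_le_sub_1 (/ v) ltac:(apply Rinv_0_lt_compat; auto)) as Hln.
  rewrite ln_Rinv in Hln by auto.
  assert (Hlv : ln v = ln c - ln 2 - ln (ln 2) - ln a).
  { unfold v, Rdiv. rewrite ln_mult, ln_Rinv, !ln_mult; try nra. apply Rinv_0_lt_compat; nra. }
  assert (c * / v = 2 * ln 2 * a) by (unfold v; field; split; lra).
  assert (c * (- ln v) <= c * (/ v - 1)) by (apply Rmult_le_compat_l; lra).
  nra.
Qed.

Lemma rsum_neg_xlnx_factor2 b (l : nat -> R) c :
  (1 <= b)%nat -> 0 <= c -> rsum b l = INR b * c -> (forall d, (d < b)%nat -> 0 <= l d) ->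
  (b = 1%nat \/ exists a, 0 < a /\ forall d, (d < b)%nat -> a <= l d <= 2 * a) ->
  INR b * neg_xlnx c - INR b * c * alpha_nat <= rsum b (fun d => neg_xlnx (l d)).
Proof.
  intros Hb Hc Hsum Hl [-> | [a [Ha Hab]]].
  - cbn [rsum INR] in *. replace (l O) with c by lra. pose proof alpha_nat_nonneg. nra.
  - assert (Hlow : rsum b (fun d => (- ln a - 2 * ln 2) * l d + 2 * ln 2 * a)
                   <= rsum b (fun d => neg_xlnx (l d))).
    { apply rsum_le. intros d Hd. pose proof (neg_xlnx_ge_chord a (l d) Ha (Hab d Hd)). lra. }
    rewrite rsum_plus, rsum_mult_l, rsum_const, Hsum in Hlow.
    assert (Hb0 : 0 < INR b) by (apply lt_0_INR; lia).
    assert (Hac : a <= c).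
    { assert (INR b * a <= INR b * c).
      { rewrite <- Hsum, <- rsum_const. apply rsum_le. intros d Hd; apply Hab; auto. }
      nra. }
    pose proof (chord_defect_le a c Ha ltac:(lra)). rewrite neg_xlnx_pos by lra.
    assert (INR b * (2 * ln 2 * (c - a)) <= INR b * (c * (ln c - ln a) + c * alpha_nat))
      by (apply Rmult_le_compat_l; lra).
    nra.
Qed.

Fixpoint argmin_from (L : nat -> R) (k c : nat) : nat :=
  match c with
  | O => k
  | S c' => let j := argmin_from L k c' in
            if Rle_dec (L j) (L (k + S c')%nat) then j else (k + S c')%nat
  end.

Lemma argmin_from_range L k c : (k <= argmin_from L k c <= k + c)%nat.
Proof. induction c; simpl; [lia|]. destruct (Rle_dec _ _); lia. Qed.

Lemma argmin_from_le L k c j : (k <= j <= k + c)%nat -> L (argmin_from L k c) <= L j.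
Proof.
  induction c; simpl; intros Hj; [replace j with k by lia; lra|].
  destruct (Nat.eq_dec j (k + S c)) as [->|].
  - destruct (Rle_dec _ _); lra.
  - specialize (IHc ltac:(lia)). destruct (Rle_dec _ _); lra.
Qed.

Lemma argmin_from_ext L L' k c : (forall j, L j = L' j) -> argmin_from L k c = argmin_from L' k c.
Proof. intros H. induction c; simpl; auto. rewrite IHc, !H. auto. Qed.

Fixpoint greedy (k m : nat) (p : nat -> R) (t : nat) : nat -> nat :=
  match t with
  | O => fun i => i
  | S t' => if Nat.ltb t' m then greedy k m p t'
            else fun i => if Nat.eqb i t'
                          then argmin_from (pushforward t' (greedy k m p t') p) k (m - k - 1)
                          else greedy k m p t' i
  end.

Lemma greedy_stable k m p t d i : (i < t)%nat -> greedy k m p (t + d) i = greedy k m p t i.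
Proof.
  induction d; intros; [rewrite Nat.add_0_r; auto|].
  rewrite Nat.add_succ_r. simpl. destruct (Nat.ltb (t + d) m); auto.
  destruct (Nat.eqb_spec i (t + d)); [lia | auto].
Qed.

Lemma greedy_small k m p t i : (i < m)%nat -> greedy k m p t i = i.
Proof.
  induction t; intros; simpl; auto. destruct (Nat.ltb_spec t m); auto.
  destruct (Nat.eqb_spec i t); [lia | auto].
Qed.

Lemma greedy_big k m p n i : (m <= i < n)%nat ->
  greedy k m p n i = argmin_from (pushforward i (greedy k m p n) p) k (m - k - 1).
Proof.
  intros Hi.
  replace (greedy k m p n i) with (greedy k m p (S i) i)
    by (replace n with (S i + (n - S i))%nat at 1 by lia; symmetry; apply greedy_stable; lia).
  cbn [greedy]. destruct (Nat.ltb_spec i m); [lia|]. rewrite Nat.eqb_refl.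
  apply argmin_from_ext. intros j. apply rsum_ext. intros j' Hj.
  replace n with (i + (n - i))%nat by lia. rewrite greedy_stable by lia. auto.
Qed.

Lemma greedy_range k m p n i : (k < m)%nat -> (m <= i < n)%nat -> (k <= greedy k m p n i < m)%nat.
Proof.
  intros. rewrite greedy_big by lia.
  pose proof (argmin_from_range (pushforward i (greedy k m p n) p) k (m - k - 1)). lia.
Qed.

Lemma greedy_surj k m p n : (k < m)%nat -> (m <= n)%nat -> surj_onto n m (greedy k m p n).
Proof.
  intros Hkm Hmn. split.
  - intros i Hi. destruct (Nat.lt_ge_cases i m).
    + rewrite greedy_small; auto.
    + pose proof (greedy_range k m p n i Hkm ltac:(lia)); lia.
  - intros j Hj. exists j. split; [lia | apply greedy_small; auto].
Qed.

Lemma pushforward_greedy_fixed k m p n j : (k < m)%nat -> (m <= n)%nat -> (j < k)%nat ->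
  pushforward n (greedy k m p n) p j = p j.
Proof.
  intros Hkm Hmn Hj. unfold pushforward.
  rewrite (rsum_ext n _ (fun i => if Nat.eqb i j then p i else 0)), rsum_dirac.
  - destruct (Nat.ltb_spec j n); [reflexivity | lia].
  - intros i Hi. destruct (Nat.lt_ge_cases i m).
    + rewrite greedy_small; auto.
    + pose proof (greedy_range k m p n i Hkm ltac:(lia)).
      destruct (Nat.eqb_spec (greedy k m p n i) j), (Nat.eqb_spec i j); lia || reflexivity.
Qed.

(* Greedy balancing: once a label has received an atom beyond its own, it is at most
   twice as heavy as any other label, because it was the lightest when it received the
   (smallest so far) atom. *)
Lemma greedy_balanced n m p k : (k < m)%nat -> (m <= n)%nat ->
  (forall i, (i < n)%nat -> 0 <= p i) -> (forall i, (S i < n)%nat -> p (S i) <= p i) ->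
  forall t, (m <= t <= n)%nat -> forall j, (k <= j < m)%nat ->
  let L := pushforward t (greedy k m p n) p in
  L j = p j \/ forall j', (k <= j' < m)%nat -> L j <= 2 * L j'.
Proof.
  intros Hkm Hmn Hp Hs t. set (F := greedy k m p n).
  induction t as [|t IH]; intros Ht j Hj L; [lia|].
  destruct (Nat.eq_dec (S t) m) as [Em|Em].
  - left. unfold L, pushforward. rewrite Em.
    rewrite (rsum_ext m _ (fun i => if Nat.eqb i j then p i else 0)), rsum_dirac.
    + destruct (Nat.ltb_spec j m); [reflexivity | lia].
    + intros i Hi. unfold F. rewrite greedy_small; auto.
  - set (js := F t).
    assert (Hjs : (k <= js < m)%nat) by (apply greedy_range; lia).
    assert (Hmin : forall j', (k <= j' < m)%nat -> pushforward t F p js <= pushforward t F p j').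
    { intros j' Hj'. unfold js, F. rewrite greedy_big by lia. apply argmin_from_le. lia. }
    assert (Hpt : p t <= pushforward t F p js).
    { pose proof (nonincreasing_le n p Hs js t ltac:(lia) ltac:(lia)).
      pose proof (pushforward_ge t F p js ltac:(intros; apply Hp; lia) ltac:(lia)).
      unfold F in *. rewrite greedy_small in * by lia. lra. }
    assert (Hmono : forall j', pushforward t F p j' <= L j').
    { intros j'. unfold L. rewrite pushforward_S. pose proof (Hp t ltac:(lia)).
      destruct (Nat.eqb (F t) j'); lra. }
    unfold L. rewrite pushforward_S. fold F. fold js.
    destruct (Nat.eqb_spec js j) as [<-|Ej].
    + right. intros j' Hj'. pose proof (Hmin j' Hj'). pose proof (Hmono j'). unfold L in *. lra.
    + rewrite Rplus_0_r. destruct (IH ltac:(lia) j Hj) as [Hl | Hr]; [left; auto | right].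
      intros j' Hj'. pose proof (Hr j' Hj'). pose proof (Hmono j'). unfold L in *. lra.
Qed.

Lemma greedy_window n m p k c : (k < m)%nat -> (m <= n)%nat ->
  (forall i, (i < n)%nat -> 0 <= p i) -> (forall i, (S i < n)%nat -> p (S i) <= p i) ->
  (forall i, (k <= i < n)%nat -> p i < c) ->
  rsum (m - k) (fun d => pushforward n (greedy k m p n) p (k + d)%nat) = INR (m - k) * c ->
  exists a, 0 < a /\ forall d, (d < m - k)%nat ->
    a <= pushforward n (greedy k m p n) p (k + d)%nat <= 2 * a.
Proof.
  intros Hkm Hmn Hp Hs Hlow Hsum. set (q := pushforward n (greedy k m p n) p) in *.
  assert (Hbal : forall j, (k <= j < m)%nat -> q j = p j \/ forall j', (k <= j' < m)%nat -> q j <= 2 * q j')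
    by (intros; apply greedy_balanced; auto; lia).
  destruct (rsum_ge_exists (m - k) (fun d => q (k + d)%nat) c ltac:(lia) ltac:(lra)) as [dm [Hdm Hcq]].
  set (j0 := argmin_from q k (m - k - 1)).
  assert (Hj0 : (k <= j0 < m)%nat) by (unfold j0; pose proof (argmin_from_range q k (m - k - 1)); lia).
  assert (Hmin : forall j, (k <= j < m)%nat -> q j0 <= q j) by (intros; apply argmin_from_le; lia).
  assert (Hup : forall j, (k <= j < m)%nat -> p j < c -> q j <= 2 * q j0).
  { intros j Hj Hpj. destruct (Hbal j Hj) as [-> | H]; [|apply H; auto].
    destruct (Hbal (k + dm)%nat ltac:(lia)) as [E | H].
    - pose proof (Hlow (k + dm)%nat ltac:(lia)). lra.
    - pose proof (H j0 Hj0). lra. }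
  assert (Hc : 0 < c) by (pose proof (Hlow k ltac:(lia)); pose proof (Hp k ltac:(lia)); lra).
  exists (q j0). split.
  - pose proof (Hup (k + dm)%nat ltac:(lia) (Hlow (k + dm)%nat ltac:(lia))). lra.
  - intros d Hd. split; [apply Hmin; lia|]. apply Hup; [lia | apply Hlow; lia].
Qed.

Lemma lower_bound n m p k c :
  (k < m)%nat -> (m < n)%nat -> (forall i, (i < n)%nat -> 0 <= p i) ->
  (forall i, (S i < n)%nat -> p (S i) <= p i) -> 0 <= c ->
  rsum k p + INR (m - k) * c = 1 -> rsum n p = 1 ->
  ((k + 1 = m)%nat \/ forall i, (k <= i < n)%nat -> p i < c) ->
  rsum k (fun i => neg_xlnx (p i)) + INR (m - k) * neg_xlnx c - alpha_nat
  <= rsum m (fun j => neg_xlnx (pushforward n (greedy k m p n) p j)).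
Proof.
  intros Hkm Hmn Hp Hs Hc Hsum Hn Hcase.
  set (q := pushforward n (greedy k m p n) p).
  assert (Hfix : forall j, (j < k)%nat -> q j = p j) by (intros; apply pushforward_greedy_fixed; lia).
  assert (Hsplit : forall g : nat -> R, rsum m g = rsum k g + rsum (m - k) (fun d => g (k + d)%nat))
    by (intros; replace m with (k + (m - k))%nat at 1 by lia; apply rsum_split).
  assert (Hl : rsum (m - k) (fun d => q (k + d)%nat) = INR (m - k) * c).
  { pose proof (rsum_pushforward n m (greedy k m p n) p (proj1 (greedy_surj k m p n ltac:(lia) ltac:(lia)))).
    fold q in H. rewrite Hsplit, (rsum_ext k q p) in H by auto. lra. }
  assert (Hdef := rsum_neg_xlnx_factor2 (m - k) (fun d => q (k + d)%nat) c ltac:(lia) Hc Hl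
    ltac:(intros; apply pushforward_nonneg; auto)).
  assert (Hwin : (m - k = 1)%nat \/ exists a, 0 < a /\ forall d, (d < m - k)%nat -> a <= q (k + d)%nat <= 2 * a).
  { destruct Hcase as [| Hlow]; [left; lia | right]. apply greedy_window with c; auto; lia. }
  specialize (Hdef Hwin).
  rewrite Hsplit, (rsum_ext k (fun j => neg_xlnx (q j)) (fun j => neg_xlnx (p j)))
    by (intros; rewrite Hfix; auto).
  assert (INR (m - k) * c * alpha_nat <= alpha_nat).
  { pose proof alpha_nat_nonneg. pose proof (rsum_nonneg k p ltac:(intros; apply Hp; lia)).
    assert (0 <= (1 - INR (m - k) * c) * alpha_nat) by (apply Rmult_le_pos; lra). nra. }
  lra.
Qed.

(* Moving mass so that one part shrinks to [s <= min a b] makes the pair more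
   spread out, which can only lower [neg_xlnx a + neg_xlnx b]. *)
Lemma neg_xlnx_transfer_le s a b : 0 <= s -> s <= a -> s <= b ->
  neg_xlnx s + neg_xlnx (a + b - s) <= neg_xlnx a + neg_xlnx b.
Proof.
  assert (W : forall a b, a <= b -> 0 <= s -> s <= a ->
            neg_xlnx s + neg_xlnx (a + b - s) <= neg_xlnx a + neg_xlnx b).
  { clear a b. intros a b Hab Hs Hsa. destruct (Rle_dec a 0).
    - replace a with 0 in * by lra. replace s with 0 by lra. replace (0 + b - 0) with b by ring. lra.
    - pose proof (neg_xlnx_le_cross s a Hs ltac:(lra) ltac:(lra)) as G1.
      pose proof (neg_xlnx_le_cross (a + b - s) b ltac:(lra) ltac:(lra) ltac:(lra)) as G2.
      rewrite (neg_xlnx_pos a), (neg_xlnx_pos b) by lra.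
      pose proof (ln_le a b ltac:(lra) Hab).
      assert ((a - s) * ln a <= (a - s) * ln b) by (apply Rmult_le_compat_l; lra).
      nra. }
  intros Hs Ha Hb. destruct (Rle_dec a b); [apply W; auto|].
  replace (a + b - s) with (b + a - s) by ring. rewrite (Rplus_comm (neg_xlnx a)).
  apply W; auto; lra.
Qed.

Definition lsum (L : list nat) (g : nat -> R) : R := fold_right (fun j acc => g j + acc) 0 L.

Lemma lsum_ext L g g' : (forall j, In j L -> g j = g' j) -> lsum L g = lsum L g'.
Proof. induction L; simpl; intros H; auto. rewrite H, IHL; auto. Qed.

Lemma lsum_app L1 L2 g : lsum (L1 ++ L2) g = lsum L1 g + lsum L2 g.
Proof. induction L1; simpl; [ring | rewrite IHL1; ring]. Qed.

Lemma rsum_lsum_seq t g : rsum t g = lsum (seq 0 t) g.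
Proof. induction t; [reflexivity|]. rewrite seq_S, lsum_app. simpl. rewrite IHt. ring. Qed.

Lemma NoDup_extract L j : NoDup L -> In j L ->
  exists L', NoDup L' /\ ~ In j L' /\ length L' = (length L - 1)%nat /\
    (forall x, In x L <-> x = j \/ In x L') /\ forall g, lsum L g = g j + lsum L' g.
Proof.
  intros HN Hj. destruct (in_split j L Hj) as [L1 [L2 ->]].
  exists (L1 ++ L2). split; [|split; [|split; [|split]]].
  - eapply NoDup_remove_1; eauto.
  - eapply NoDup_remove_2; eauto.
  - rewrite !length_app. simpl. lia.
  - intros x. rewrite !in_app_iff. simpl. intuition (subst; auto).
  - intros g. rewrite !lsum_app. simpl. ring.
Qed.

Lemma rsum_Qm_S n l p g : (2 <= l <= S n)%nat ->
  rsum l (fun r => g (Qm (S n) l p r)) = rsum (l - 1) (fun r => g (Qm n (l - 1) p r)) + g (p n).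
Proof.
  intros Hl. destruct l as [|l]; [lia|]. cbn [rsum]. replace (S l - 1)%nat with l by lia.
  rewrite (rsum_ext l _ (fun r => g (Qm n l p r))).
  - destruct l as [|l]; [lia|]. cbn [Qm]. do 3 f_equal. lia.
  - intros [|r] Hr; cbn [Qm]; do 2 f_equal; lia.
Qed.

Lemma pushforward_isolated n f p : (forall i, (i < n)%nat -> f i <> f n) ->
  pushforward (S n) f p (f n) = p n /\
  forall j, j <> f n -> pushforward (S n) f p j = pushforward n f p j.
Proof.
  intros Hf. split.
  - rewrite pushforward_S, Nat.eqb_refl.
    unfold pushforward. rewrite (rsum_ext n _ (fun _ => 0)), rsum_const; [ring|].
    intros i Hi. destruct (Nat.eqb_spec (f i) (f n)); [exfalso; apply (Hf i); auto | reflexivity].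
  - intros j Hj. rewrite pushforward_S. destruct (Nat.eqb_spec (f n) j); [congruence | ring].
Qed.

Definition reroute (f : nat -> nat) (x a b : nat) : nat -> nat :=
  fun i => if Nat.eqb i x then a else if Nat.eqb (f i) a then b else f i.

Lemma pushforward_reroute n f p x b : (x < n)%nat -> b <> f x ->
  let g := reroute f x (f x) b in
  pushforward n g p (f x) = p x /\
  pushforward n g p b = pushforward n f p b + pushforward n f p (f x) - p x /\
  forall j, j <> f x -> j <> b -> pushforward n g p j = pushforward n f p j.
Proof.
  intros Hx Hb g. unfold pushforward.
  assert (Hpx : p x = rsum n (fun i => if Nat.eqb i x then p i else 0))
    by (rewrite rsum_dirac; destruct (Nat.ltb_spec x n); [reflexivity | lia]).
  unfold g, reroute. split; [|split].
  - rewrite Hpx. apply rsum_ext. intros i _.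
    destruct (Nat.eqb_spec i x); [rewrite Nat.eqb_refl; reflexivity|].
    destruct (Nat.eqb_spec (f i) (f x)).
    + destruct (Nat.eqb_spec b (f x)); [congruence | reflexivity].
    + destruct (Nat.eqb_spec (f i) (f x)); [congruence | reflexivity].
  - rewrite Hpx, <- rsum_plus, <- rsum_minus. apply rsum_ext. intros i _.
    destruct (Nat.eqb_spec i x) as [->|].
    + destruct (Nat.eqb_spec (f x) b); [congruence|]. rewrite Nat.eqb_refl. ring.
    + destruct (Nat.eqb_spec (f i) (f x)) as [E|].
      * rewrite Nat.eqb_refl, E. destruct (Nat.eqb_spec (f x) b); [congruence | ring].
      * destruct (Nat.eqb (f i) b); ring.
  - intros j Hj1 Hj2. apply rsum_ext. intros i _.
    destruct (Nat.eqb_spec i x) as [->|].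
    + destruct (Nat.eqb_spec (f x) j); [congruence | reflexivity].
    + destruct (Nat.eqb_spec (f i) (f x)) as [E|].
      * rewrite E. destruct (Nat.eqb_spec b j), (Nat.eqb_spec (f x) j); congruence || reflexivity.
      * reflexivity.
Qed.

Lemma reroute_onto n f x b L : (x < n)%nat -> In b L -> b <> f x ->
  (forall i, (i < n)%nat -> In (f i) L) -> (forall j, In j L -> exists i, (i < n)%nat /\ f i = j) ->
  let g := reroute f x (f x) b in
  (forall i, (i < n)%nat -> In (g i) L) /\ (forall j, In j L -> exists i, (i < n)%nat /\ g i = j) /\
  (forall i, i <> x -> g i <> f x).
Proof.
  intros Hx Hb Hbx Hmap Hsurj g. unfold g, reroute. split; [|split].
  - intros i Hi. destruct (Nat.eqb i x), (Nat.eqb (f i) (f x)); auto.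
  - intros j Hj. destruct (Nat.eq_dec j (f x)) as [->|Hjx].
    + exists x. rewrite Nat.eqb_refl. auto.
    + destruct (Hsurj j Hj) as [i [Hi <-]]. exists i. split; auto.
      destruct (Nat.eqb_spec i x) as [->|]; [congruence|].
      destruct (Nat.eqb_spec (f i) (f x)); congruence.
  - intros i Hi. destruct (Nat.eqb_spec i x); [congruence|].
    destruct (Nat.eqb_spec (f i) (f x)); auto.
Qed.

Lemma lsum_reroute_le n f p x b L : NoDup L -> In (f x) L -> In b L -> b <> f x -> (x < n)%nat ->
  (forall i, (i < n)%nat -> 0 <= p i) -> p x <= pushforward n f p b ->
  lsum L (fun j => neg_xlnx (pushforward n (reroute f x (f x) b) p j))
  <= lsum L (fun j => neg_xlnx (pushforward n f p j)).
Proof.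
  intros HN Ha Hb Hba Hx Hp Hpb.
  destruct (pushforward_reroute n f p x b Hx Hba) as [Ea [Eb Ej]].
  destruct (NoDup_extract L (f x) HN Ha) as [L1 [HN1 [Ha1 [_ [HL1 Hs1]]]]].
  assert (Hb1 : In b L1) by (apply HL1 in Hb; destruct Hb; [congruence | auto]).
  destruct (NoDup_extract L1 b HN1 Hb1) as [L2 [_ [Hb2 [_ [HL2 Hs2]]]]].
  rewrite !Hs1, !Hs2, Ea, Eb.
  rewrite (lsum_ext L2 (fun j => neg_xlnx (pushforward n (reroute f x (f x) b) p j))
                       (fun j => neg_xlnx (pushforward n f p j))).
  - pose proof (neg_xlnx_transfer_le (p x) (pushforward n f p b) (pushforward n f p (f x))
      (Hp x Hx) Hpb (pushforward_ge n f p x Hp Hx)).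
    lra.
  - intros j Hj. rewrite Ej; auto.
    + intros ->. apply Ha1, HL2. auto.
    + intros ->. auto.
Qed.

Lemma lsum_pushforward_isolated n f p (h : R -> R) L L' :
  (forall i, (i < n)%nat -> f i <> f n) -> ~ In (f n) L' ->
  (forall g, lsum L g = g (f n) + lsum L' g) ->
  lsum L (fun j => h (pushforward (S n) f p j)) = h (p n) + lsum L' (fun j => h (pushforward n f p j)).
Proof.
  intros Hf HL' HL. destruct (pushforward_isolated n f p Hf) as [E1 E2].
  rewrite HL, E1. f_equal. apply lsum_ext. intros j Hj. rewrite E2; auto.
  intros ->. auto.
Qed.

Lemma lsum_pushforward_ge_Qm n : forall L p f, NoDup L -> (1 <= length L <= n)%nat ->
  (forall i, (i < n)%nat -> 0 <= p i) -> (forall i, (S i < n)%nat -> p (S i) <= p i) ->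
  (forall i, (i < n)%nat -> In (f i) L) -> (forall j, In j L -> exists i, (i < n)%nat /\ f i = j) ->
  rsum (length L) (fun r => neg_xlnx (Qm n (length L) p r))
  <= lsum L (fun j => neg_xlnx (pushforward n f p j)).
Proof.
  induction n as [|n IH]; intros L p f HN Hl Hp Hs Hmap Hsurj; [lia|].
  destruct (Nat.eq_dec (length L) 1) as [E1|E1].
  - destruct L as [|j0 [|x L]]; cbn [length] in *; try lia.
    cbn [rsum lsum fold_right Qm]. replace (S n - 1 + 1)%nat with (S n) by lia.
    unfold pushforward. rewrite (rsum_ext (S n) (fun i => if Nat.eqb (f i) j0 then p i else 0) p); [lra|].
    intros i Hi. destruct (Hmap i Hi) as [->|[]]. now rewrite Nat.eqb_refl.
  - assert (Hiso : forall g, (forall i, (i < S n)%nat -> In (g i) L) ->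
                   (forall j, In j L -> exists i, (i < S n)%nat /\ g i = j) ->
                   (forall i, (i < n)%nat -> g i <> g n) ->
                   rsum (length L) (fun r => neg_xlnx (Qm (S n) (length L) p r))
                   <= lsum L (fun j => neg_xlnx (pushforward (S n) g p j))).
    { intros g Hgmap Hgsurj Hg.
      destruct (NoDup_extract L (g n) HN (Hgmap n ltac:(lia))) as [L' [HN' [HnL' [Hlen [HL' Hs']]]]].
      rewrite rsum_Qm_S, (lsum_pushforward_isolated n g p neg_xlnx L L') by (auto; lia).
      rewrite Rplus_comm, <- Hlen. apply Rplus_le_compat_l, IH; auto; try lia.
      + intros i Hi. destruct (proj1 (HL' (g i)) (Hgmap i ltac:(lia))) as [E|]; auto.
        exfalso. apply (Hg i Hi). auto.
      + intros j Hj. destruct (Hgsurj j (proj2 (HL' j) (or_intror Hj))) as [i [Hi Hgi]].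
        exists i. split; auto. destruct (Nat.eq_dec i n) as [->|]; [congruence | lia]. }
    destruct (classic (exists i, (i < n)%nat /\ f i = f n)) as [_ | Hno].
    + destruct (NoDup_extract L (f n) HN (Hmap n ltac:(lia))) as [L' [_ [HnL' [Hlen [HL' _]]]]].
      destruct L' as [|b L'']; [cbn [length] in Hlen; lia|].
      assert (Hb : In b L) by (apply HL'; right; left; auto).
      assert (Hbn : b <> f n) by (intros ->; apply HnL'; left; auto).
      destruct (reroute_onto (S n) f n b L ltac:(lia) Hb Hbn Hmap Hsurj) as [Hgmap [Hgsurj Hg]].
      apply Rle_trans with (lsum L (fun j => neg_xlnx (pushforward (S n) (reroute f n (f n) b) p j))).
      * apply Hiso; auto. intros i Hi.
        replace (reroute f n (f n) b n) with (f n) by (unfold reroute; now rewrite Nat.eqb_refl).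
        apply Hg. lia.
      * apply lsum_reroute_le; auto.
        destruct (Hsurj b Hb) as [i [Hi <-]].
        pose proof (nonincreasing_le (S n) p Hs i n ltac:(lia) ltac:(lia)).
        pose proof (pushforward_ge (S n) f p i Hp Hi). lra.
    + apply Hiso; auto. intros i Hi E. apply Hno. eauto.
Qed.

Fixpoint exp_term (x : R) (k : nat) : R :=
  match k with O => 1 | S k' => exp_term x k' * x / INR (S k') end.

Lemma exp_term_S x k : exp_term x (S k) = exp_term x k * (x / (INR k + 1)).
Proof. cbn [exp_term]. rewrite S_INR. unfold Rdiv. ring. Qed.

Lemma exp_term_nonneg x k : 0 <= x -> 0 <= exp_term x k.
Proof.
  intros Hx; induction k; cbn [exp_term]; [lra|].
  apply Rmult_le_pos; [apply Rmult_le_pos; auto|].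
  left; apply Rinv_0_lt_compat, lt_0_INR; lia.
Qed.

Lemma exp_partial_sum x N : Exp_prop.E1 x N = sum_f_R0 (exp_term x) N.
Proof.
  apply sum_eq. intros k _. induction k as [|k IH]; [simpl; field|].
  cbn [exp_term]. rewrite <- IH.
  assert (INR (fact k) <> 0) by apply INR_fact_neq_0.
  assert (INR (S k) <> 0) by (apply not_0_INR; lia).
  replace (INR (fact (S k))) with (INR (S k) * INR (fact k)) by (rewrite <- mult_INR; reflexivity).
  rewrite <- tech_pow_Rmult. field; auto.
Qed.

Lemma exp_ge_partial_sum x N : 0 <= x -> sum_f_R0 (exp_term x) N <= exp x.
Proof.
  intros Hx. rewrite <- exp_partial_sum. apply growing_ineq; [|apply Exp_prop.E1_cvg].
  intro k. rewrite !exp_partial_sum. cbn [sum_f_R0]. pose proof (exp_term_nonneg x (S k) Hx). lra.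
Qed.

(* The tail after the term of index [N+1] is dominated by a geometric series of ratio
   [x / (N + 2)]. *)
Definition exp_upper (x : R) (N : nat) : R :=
  sum_f_R0 (exp_term x) N + exp_term x (S N) / (1 - x / (INR N + 2)).

Lemma exp_upper_S x N : 0 <= x < 2 -> exp_upper x (S N) <= exp_upper x N.
Proof.
  intros Hx. unfold exp_upper. cbn [sum_f_R0].
  rewrite (exp_term_S x (S N)), S_INR.
  replace (INR N + 1 + 1) with (INR N + 2) by ring. replace (INR N + 1 + 2) with (INR N + 3) by ring.
  set (t := exp_term x (S N)). set (r := x / (INR N + 2)). set (r' := x / (INR N + 3)).
  assert (Ht : 0 <= t) by (apply exp_term_nonneg; lra).
  assert (HN : 0 <= INR N) by apply pos_INR.
  assert (Hr : 0 <= r' <= r /\ r < 1).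
  { unfold r, r'. repeat split.
    - apply Rmult_le_pos; [lra | left; apply Rinv_0_lt_compat; lra].
    - apply Rmult_le_compat_l; [lra | apply Rinv_le_contravar; lra].
    - apply Rmult_lt_reg_r with (INR N + 2); [lra|]. field_simplify; lra. }
  assert (t * r / (1 - r') <= t * r / (1 - r)).
  { apply Rmult_le_compat_l; [apply Rmult_le_pos; lra | apply Rinv_le_contravar; lra]. }
  assert (t + t * r / (1 - r) = t / (1 - r)) by (field; lra).
  lra.
Qed.

Lemma exp_le_upper x N : 0 <= x < 2 -> exp x <= exp_upper x N.
Proof.
  intros Hx.
  assert (Hdec : forall d, exp_upper x (N + d) <= exp_upper x N).
  { induction d; [rewrite Nat.add_0_r; lra|].
    rewrite Nat.add_succ_r. pose proof (exp_upper_S x (N + d) Hx). lra. }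
  assert (Hsum : forall M, sum_f_R0 (exp_term x) M <= exp_upper x M).
  { intro M. unfold exp_upper. assert (HM := pos_INR M).
    assert (0 <= exp_term x (S M) / (1 - x / (INR M + 2))); [|lra].
    apply Rmult_le_pos; [apply exp_term_nonneg; lra|]. left; apply Rinv_0_lt_compat.
    assert (x / (INR M + 2) < 1) by (apply Rmult_lt_reg_r with (INR M + 2); [lra|]; field_simplify; lra).
    lra. }
  assert (Hmono : forall M M', (M <= M')%nat -> sum_f_R0 (exp_term x) M <= sum_f_R0 (exp_term x) M').
  { intros M M' HM. induction HM; [lra|]. cbn [sum_f_R0].
    pose proof (exp_term_nonneg x (S m) ltac:(lra)). lra. }
  apply Rle_cv_lim with (Un := Exp_prop.E1 x) (Vn := fun _ => exp_upper x N).
  - intro M. rewrite exp_partial_sum. destruct (Nat.le_gt_cases M N) as [HMN|HMN].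
    + pose proof (Hmono M N HMN). pose proof (Hsum N). lra.
    + replace M with (N + (M - N))%nat by lia. pose proof (Hsum (N + (M - N))%nat).
      pose proof (Hdec (M - N)%nat). lra.
  - apply Exp_prop.E1_cvg.
  - intros e He. exists O. intros. unfold Rdist. rewrite Rminus_diag, Rabs_R0. lra.
Qed.

Lemma ln2_lower_bound : 6931471 / 10000000 <= ln 2.
Proof.
  rewrite <- (ln_exp (6931471 / 10000000)). apply ln_le; [apply exp_pos|].
  eapply Rle_trans; [apply (exp_le_upper _ 12); lra|].
  unfold exp_upper. cbn [sum_f_R0 exp_term INR]. lra.
Qed.

Lemma ln_ln2_lower_bound : - (366515 / 1000000) <= ln (6931471 / 10000000).
Proof.
  replace (6931471 / 10000000) with (/ (10000000 / 6931471)) by field.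
  rewrite ln_Rinv by lra. apply Ropp_le_contravar.
  rewrite <- (ln_exp (366515 / 1000000)). apply ln_le; [lra|].
  eapply Rle_trans; [|apply (exp_ge_partial_sum _ 10); lra].
  cbn [sum_f_R0 exp_term INR]. lra.
Qed.

(* [(1 + ln T) / T] is increasing on [(0, 1]], its derivative being [- ln T / T^2]. *)
Lemma one_plus_ln_div_le a b : 0 < a -> a <= b -> b <= 1 -> (1 + ln a) / a <= (1 + ln b) / b.
Proof.
  intros Ha Hab Hb.
  pose proof (ln_le_sub_1 (a / b) ltac:(apply Rdiv_lt_0_compat; lra)) as H1.
  unfold Rdiv in H1. rewrite ln_mult, ln_Rinv in H1 by (try apply Rinv_0_lt_compat; lra).
  pose proof (ln_le_sub_1 a Ha) as H2.
  assert (a / b * b = a) by (field; lra).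
  assert (Hd : (b - a) * (- ln a) >= (b - a) * (b - a) / b).
  { assert ((b - a) / b <= - ln a).
    { assert (a <= a / b) by (apply Rmult_le_reg_r with b; [lra|]; field_simplify; nra).
      assert ((b - a) / b = 1 - a / b) by (field; lra). lra. }
    unfold Rdiv in *. nra. }
  apply Rmult_le_reg_r with (a * b); [nra|].
  replace ((1 + ln a) / a * (a * b)) with (b * (1 + ln a)) by (field; lra).
  replace ((1 + ln b) / b * (a * b)) with (a * (1 + ln b)) by (field; lra).
  unfold Rdiv in *. nra.
Qed.

Lemma alpha_lt : alpha < 0.08608.
Proof.
  pose proof ln2_lower_bound. pose proof ln_ln2_lower_bound.
  assert (ln 2 <= 1).
  { rewrite <- (ln_exp 1). apply ln_le; [lra|]. pose proof (exp_ineq1 1). lra. }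
  pose proof (one_plus_ln_div_le (6931471 / 10000000) (ln 2) ltac:(lra) ltac:(lra) ltac:(lra)).
  assert (0.91392 < (1 + ln (6931471 / 10000000)) / (6931471 / 10000000)).
  { apply Rmult_lt_reg_r with (6931471 / 10000000); [lra|]. field_simplify; lra. }
  unfold alpha. lra.
Qed.

Lemma rsum_level m k c (q p : nat -> R) (g : R -> R) : (k <= m)%nat ->
  (forall r, q r = if Nat.ltb r k then p r else c) ->
  rsum m (fun r => g (q r)) = rsum k (fun i => g (p i)) + INR (m - k) * g c.
Proof.
  intros Hkm Hq. replace m with (k + (m - k))%nat at 1 by lia. rewrite rsum_split, <- rsum_const.
  f_equal; apply rsum_ext; intros i Hi; rewrite Hq.
  - destruct (Nat.ltb_spec i k); [reflexivity | lia].
  - destruct (Nat.ltb_spec (k + i) k); [lia | reflexivity].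
Qed.

Definition merge_head (n m : nat) (i : nat) : nat :=
  if Nat.leb i (n - m) then O else (i - (n - m))%nat.

Lemma merge_head_surj n m : (1 <= m <= n)%nat -> surj_onto n m (merge_head n m).
Proof.
  intros Hm. unfold merge_head. split.
  - intros i Hi. destruct (Nat.leb_spec i (n - m)); lia.
  - intros [|j] Hj.
    + exists O. split; [lia|]. destruct (Nat.leb_spec 0 (n - m)); [reflexivity | lia].
    + exists (n - m + S j)%nat. split; [lia|]. destruct (Nat.leb_spec (n - m + S j) (n - m)); lia.
Qed.

Lemma pushforward_merge_head n m p r : (1 <= m <= n)%nat -> (r < m)%nat ->
  pushforward n (merge_head n m) p r = Qm n m p r.
Proof.
  intros Hm Hr. unfold pushforward, merge_head. destruct r as [|r]; cbn [Qm].
  - replace n with ((n - m + 1) + (m - 1))%nat at 1 by lia. rewrite rsum_split.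
    rewrite (rsum_ext (n - m + 1) _ p), (rsum_ext (m - 1) _ (fun _ => 0)), rsum_const; [ring| |].
    + intros i _. destruct (Nat.leb_spec (n - m + 1 + i) (n - m)); [lia|].
      destruct (Nat.eqb_spec (n - m + 1 + i - (n - m)) 0); [lia | reflexivity].
    + intros i Hi. destruct (Nat.leb_spec i (n - m)); [reflexivity | lia].
  - rewrite (rsum_ext n _ (fun i => if Nat.eqb i (n - m + S r) then p i else 0)), rsum_dirac.
    + destruct (Nat.ltb_spec (n - m + S r) n); [reflexivity | lia].
    + intros i _. destruct (Nat.leb_spec i (n - m)).
      * destruct (Nat.eqb_spec i (n - m + S r)); [lia | reflexivity].
      * destruct (Nat.eqb_spec (i - (n - m)) (S r)), (Nat.eqb_spec i (n - m + S r));
          lia || reflexivity.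
Qed.

Theorem theorem1 (n m : nat) (p : nat -> R) :
  (2 <= m)%nat -> (m < n)%nat ->
  (forall i, (i < n)%nat -> 0 <= p i) ->
  (forall i, (S i < n)%nat -> p (S i) <= p i) ->
  rsum n p = 1 ->
  ((forall f, surj_onto n m f -> entropy m (pushforward n f p) <= entropy m (Rm n m p)) /\
   (exists f, surj_onto n m f /\
      entropy m (Rm n m p) - alpha <= entropy m (pushforward n f p))) /\
  alpha < 0.08608 /\
  ((forall f, surj_onto n m f -> entropy m (Qm n m p) <= entropy m (pushforward n f p)) /\
   (exists f, surj_onto n m f /\
      entropy m (pushforward n f p) = entropy m (Qm n m p))).
Proof.
  intros Hm Hmn Hp Hs Hn.
  destruct (Rm_shape n m p Hm Hmn Hp Hs Hn) as [k [c [Hkm [Hc [Hcp [Hsum [HRm Hcase]]]]]]].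
  assert (Hinv : 0 < / ln 2) by (apply Rinv_0_lt_compat, ln2_pos).
  assert (HR := rsum_level m k c (Rm n m p) p neg_xlnx ltac:(lia) HRm).
  repeat split; [| | apply alpha_lt | |].
  - intros f Hf. rewrite !entropy_neg_xlnx, HR. apply Rmult_le_compat_r; [lra|].
    apply upper_bound; auto.
  - exists (greedy k m p n). split; [apply greedy_surj; lia|].
    rewrite !entropy_neg_xlnx, HR, alpha_eq. unfold Rdiv. rewrite <- Rmult_minus_distr_r.
    apply Rmult_le_compat_r; [lra|]. apply lower_bound; auto.
  - intros f [Hmap Hsurj]. rewrite !entropy_neg_xlnx. apply Rmult_le_compat_r; [lra|].
    rewrite (rsum_lsum_seq m (fun j => neg_xlnx (pushforward n f p j))).
    pose proof (lsum_pushforward_ge_Qm n (seq 0 m) p f (seq_NoDup m 0)) as Hmin.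
    rewrite length_seq in Hmin. apply Hmin; auto; try lia.
    + intros i Hi. apply in_seq. pose proof (Hmap i Hi). lia.
    + intros j Hj. apply in_seq in Hj. apply Hsurj. lia.
  - exists (merge_head n m). split; [apply merge_head_surj; lia|].
    rewrite !entropy_neg_xlnx. f_equal. apply rsum_ext. intros r Hr.
    rewrite pushforward_merge_head by lia. reflexivity.
Qed.
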